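(* Let $P$ be a positive event pattern and $I$ an event stream, and let $G=(V,\mathcal{E})$ be the GRETA graph of $P$ and $I$. Call a vertex a START vertex if its type is $start(P)$ and an END vertex if its type is $end(P)$. Then the set of event sequences $(v_0,v_1,\dots,v_m)$ ($m \ge 0$) that form directed paths in $G$ from a START vertex $v_0$ to an END vertex $v_m$ is equal to the set of event trends matched by $P$ in $I$; that is, for each such path there is a trend consisting of the same events in the same order, and vice versa.
   Context: Events: each event $e$ has an event type $e.type$ and an occurrence time $e.time \in \mathbb{Q}_{\ge 0}$. An event stream $I$ is a finite collection of distinct events arriving in nondecreasing order of time. Positive patterns: an event type $E$ is a pattern; if $P_i,P_j$ are patterns then $P_i+$ and $\mathsf{SEQ}(P_i,P_j)$ are patterns; each event type occurs at most once in a pattern. Matches over $I$: $matches(E)=\{(e): e\in I, e.type=E\}$; $(e_1,\dots,e_k)\in matches(\mathsf{SEQ}(P_i,P_j))$ iff for some $1\le m\le k$, $(e_1,\dots,e_m)\in matches(P_i)$, $(e_{m+1},\dots,e_k)\in matches(P_j)$ and $e_1.time<e_2.time<\dots<e_k.time$; $matches(P_i+)$ consists of concatenations $s_1\cdots s_k$ ($k\ge1$) with each $s_l\in matches(P_i)$ and the last event of $s_l$ strictly earlier than the first event of $s_{l+1}$. The event trends matched by $P$ in $I$ are the elements of $matches(P)$. Define $start(E)=end(E)=E$, $start(P_i+)=start(P_i)$, $end(P_i+)=end(P_i)$, $start(\mathsf{SEQ}(P_i,P_j))=start(P_i)$, $end(\mathsf{SEQ}(P_i,P_j))=end(P_j)$.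 The GRETA graph $G=(V,\mathcal{E})$ of $P$ and $I$ is the directed graph whose vertices are the events of $I$ that occur in at least one trend matched by $P$ in $I$, with an edge $(e_i,e_j)$ iff $e_i$ and $e_j$ are consecutive (adjacent) events, in this order, in some trend matched by $P$ in $I$. A path may consist of a single vertex. *)

From mathcomp Require Import all_boot all_order all_algebra.
Set Implicit Arguments. Unset Strict Implicit. Unset Printing Implicit Defensive.
Import Order.TTheory GRing.Theory Num.Theory.
Local Open Scope ring_scope.

Inductive pattern (T : Type) : Type :=
| PAtom of T
| PPlus of pattern T
| PSeq of pattern T & pattern T.

Fixpoint ptypes (T : Type) (P : pattern T) : seq T :=
  match P with
  | PAtom a => [:: a]
  | PPlus P1 => ptypes P1
  | PSeq P1 P2 => ptypes P1 ++ ptypes P2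
  end.

Definition wf_pattern (T : eqType) (P : pattern T) : bool := uniq (ptypes P).

Fixpoint pstart (T : Type) (P : pattern T) : T :=
  match P with
  | PAtom a => a
  | PPlus P1 => pstart P1
  | PSeq P1 _ => pstart P1
  end.

Fixpoint pend (T : Type) (P : pattern T) : T :=
  match P with
  | PAtom a => a
  | PPlus P1 => pend P1
  | PSeq _ P2 => pend P2
  end.

Section Matches.
Variables (T E : eqType) (etype : E -> T) (etime : E -> rat).

Definition valid_stream (I : seq E) : Prop :=
  [/\ uniq I, sorted (fun x y => etime x <= etime y) I
    & forall e, e \in I -> 0 <= etime e].

Definition seg_before (a b : seq E) : bool :=
  match ohead (rev a), ohead b with
  | Some x, Some y => etime x < etime y
  | _, _ => false
  end.

Fixpoint matches (I : seq E) (P : pattern T) (s : seq E) : Prop :=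
  match P with
  | PAtom a => exists e, [/\ s = [:: e], e \in I & etype e = a]
  | PSeq P1 P2 => exists s1 s2,
      [/\ s = s1 ++ s2, matches I P1 s1, matches I P2 s2
        & sorted (fun x y => etime x < etime y) s]
  | PPlus P1 => exists ss : seq (seq E),
      [/\ ss != [::], s = flatten ss,
          (forall x, x \in ss -> matches I P1 x)
        & sorted seg_before ss]
  end.

Definition greta_vertex (I : seq E) (P : pattern T) (e : E) : Prop :=
  exists s, matches I P s /\ e \in s.

Definition greta_edge (I : seq E) (P : pattern T) (e1 e2 : E) : Prop :=
  exists s1 s2, matches I P (s1 ++ e1 :: e2 :: s2).

Fixpoint prop_path (r : E -> E -> Prop) (x : E) (s : seq E) : Prop :=
  match s with
  | [::] => True
  | y :: s' => r x y /\ prop_path r y s'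
  end.

Definition start_end_path (I : seq E) (P : pattern T) (s : seq E) : Prop :=
  exists v0 rest, [/\ s = v0 :: rest,
    (forall v, v \in s -> greta_vertex I P v),
    prop_path (greta_edge I P) v0 rest,
    etype v0 = pstart P
  & etype (last v0 rest) = pend P].

End Matches.

From mathcomp Require Import all_boot all_order all_algebra.

Set Implicit Arguments. Unset Strict Implicit. Unset Printing Implicit Defensive.

(* Read the pattern as an automaton on event types: [follows P a b]
   holds when type [b] may come right after type [a] in a trend of [P] (the
   GRETA template).  A sequence of stream events is a trend of [P] iff it starts
   with type [start P], ends with type [end P], and every consecutive pair has
   increasing times and follows the template.  For [P+] such a path is cut at the
   [end P -> start P] jumps into trends of [P]; for [SEQ(P1, P2)] the types of
   [P1] and [P2] are disjoint, so the path crosses from [P1] to [P2] exactly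
   once.  Hence every GRETA edge satisfies the local condition, and a
   START-to-END path of GRETA edges is a trend. *)

Lemma all_flatten (A : Type) (a : pred A) (ss : seq (seq A)) :
  all a (flatten ss) = all (all a) ss.
Proof. by elim: ss => //= w ss IH; rewrite all_cat IH. Qed.

Section SegmentedPaths.
Variable A : eqType.
Implicit Types (r : rel A) (h l : pred A) (x y : A) (w : seq A) (ss : seq (seq A)).

Definition path_between h l r w : bool :=
  if w is x :: u then [&& h x, l (last x u) & path r x u] else false.

Definition seg_rel r (w1 w2 : seq A) : bool :=
  match w1, w2 with
  | x :: u, y :: _ => r (last x u) y
  | _, _ => false
  end.

Lemma eq_path_between h l r r' : r =2 r' -> path_between h l r =1 path_between h l r'.
Proof. by move=> rr' [|x u] //=; rewrite (eq_path rr'). Qed.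

Lemma sub_path_between h l r r' w :
  subrel r r' -> path_between h l r w -> path_between h l r' w.
Proof. by move=> rr'; case: w => //= x u /and3P[-> -> /(sub_path rr')]. Qed.

Lemma path_between_cat h1 l1 h2 l2 r x u y v :
  path_between h1 l1 r (x :: u) -> path_between h2 l2 r (y :: v) ->
  r (last x u) y -> path_between h1 l2 r (x :: u ++ y :: v).
Proof.
case/and3P=> hx _ pu /and3P[_ lv pv] rxy.
by rewrite /= hx last_cat lv cat_path pu /= rxy.
Qed.

Lemma path_between_flatten h l r1 r2 ss :
  ss != [::] -> all (path_between h l r1) ss -> sorted (seg_rel r2) ss ->
  path_between h l (relU r1 [rel a b | [&& l a, h b & r2 a b]]) (flatten ss).
Proof.
elim: ss => // -[//|x u] [|[//|y v] ss] IH _ /andP[seg segs] sorted_ss.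
  by rewrite /= cats0; apply: sub_path_between seg; apply: subrelUl.
have /andP[r2xy {}sorted_ss] := sorted_ss.
apply: (path_between_cat (sub_path_between (@subrelUl _ _ _) seg) (IH isT segs sorted_ss)).
apply/orP; right; apply/and3P; split => //.
- by case/and3P: seg.
- by case/andP: segs => /and3P[].
Qed.

Lemma path_relU_split h l r1 r2 x s :
  (forall a b, r2 a b -> l a && h b) -> l (last x s) -> path (relU r1 r2) x s ->
  exists t ss, [/\ s = t ++ flatten ss, path_between xpredT l r1 (x :: t),
                   all (path_between h l r1) ss & sorted (seg_rel r2) ((x :: t) :: ss)].
Proof.
move=> r2_lh; elim: s x => [|y s IH] x /=.
  by move=> lx _; exists [::], [::]; split; rewrite //= lx.
move=> ls /andP[/orP[r1xy | r2xy] pys].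
all: have [t [ss [-> seg segs sorted_ss]]] := IH y ls pys.
- exists (y :: t), ss; split => //=; first by move: seg; rewrite /= r1xy.
  by case: ss sorted_ss {segs} => //= w ss /andP[rw ->]; rewrite andbT.
- have /andP[lx hy] := r2_lh _ _ r2xy.
  exists [::], ((y :: t) :: ss); split => //=; first by rewrite lx.
    by rewrite segs andbT hy; case/and3P: seg => _ -> ->.
  by rewrite r2xy.
Qed.

Lemma path_between_split h l r1 r2 w :
  (forall a b, r2 a b -> l a && h b) -> path_between h l (relU r1 r2) w ->
  exists2 ss, w = flatten ss & all (path_between h l r1) ss && sorted (seg_rel r2) ss.
Proof.
case: w => // x s r2_lh /and3P[hx ls pxs].
have [t [ss [-> seg segs sorted_ss]]] := path_relU_split r2_lh ls pxs.
exists ((x :: t) :: ss) => //; move: sorted_ss; rewrite /= segs => ->; rewrite !andbT.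
by case/and3P: seg => _ -> ->; rewrite hx.
Qed.

Section Crossing.
Variables (p : pred A) (r1 r2 r3 : rel A).
Hypotheses (r1_out : forall a b, r1 a b -> ~~ p a && ~~ p b)
           (r2_in : forall a b, r2 a b -> p a && p b)
           (r3_cross : forall a b, r3 a b -> ~~ p a && p b).

Let r := relU r1 (relU r2 r3).

Lemma path_stays_in x s : p x -> path r x s -> path r2 x s.
Proof.
elim: s x => // y s IH x px /= /andP[/or3P[rxy|rxy|rxy] pys].
- by case/andP: (r1_out rxy); rewrite px.
- by rewrite rxy IH //; case/andP: (r2_in rxy).
- by case/andP: (r3_cross rxy); rewrite px.
Qed.

Lemma path_crossing_split x s : ~~ p x -> p (last x s) -> path r x s ->
  exists t y u, [/\ s = t ++ y :: u, path r1 x t, r3 (last x t) y & path r2 y u].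
Proof.
elim: s x => [|y s IH] x /= px; first by rewrite (negbTE px).
move=> ps /andP[/or3P[rxy|rxy|rxy] pys].
- have [|t [z [u [-> pt rz pu]]]] := IH y _ ps pys; first by case/andP: (r1_out rxy).
  by exists (y :: t), z, u; rewrite /= rxy.
- by case/andP: (r2_in rxy); rewrite (negbTE px).
- exists [::], y, s; split => //; apply: path_stays_in pys.
  by case/andP: (r3_cross rxy).
Qed.

End Crossing.

End SegmentedPaths.

Lemma prop_path_sub (A : eqType) (r : A -> A -> Prop) (r' : rel A) x s :
  (forall a b, r a b -> r' a b) -> prop_path r x s -> path r' x s.
Proof. by move=> rr'; elim: s x => //= y s IH x [/rr' -> /IH]. Qed.

Section PatternTypes.
Variable T : eqType.
Implicit Types (P : pattern T) (a b : T).

Fixpoint follows P a b : bool :=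
  match P with
  | PAtom _ => false
  | PPlus P1 => follows P1 a b || (a == pend P1) && (b == pstart P1)
  | PSeq P1 P2 =>
      [|| follows P1 a b, follows P2 a b | (a == pend P1) && (b == pstart P2)]
  end.

Lemma mem_pstart P : pstart P \in ptypes P.
Proof.
by elim: P => [a|P IH|P1 IH1 P2 IH2] /=; rewrite ?mem_seq1 ?mem_cat ?IH ?IH1 ?orbT.
Qed.

Lemma mem_pend P : pend P \in ptypes P.
Proof.
by elim: P => [a|P IH|P1 IH1 P2 IH2] /=; rewrite ?mem_seq1 ?mem_cat ?IH ?IH2 ?orbT.
Qed.

Lemma follows_ptypes P a b : follows P a b -> (a \in ptypes P) && (b \in ptypes P).
Proof.
elim: P => [c|P IH|P1 IH1 P2 IH2] //=.
  by case/orP => [/IH //| /andP[/eqP-> /eqP->]]; rewrite mem_pend mem_pstart.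
rewrite !mem_cat.
case/or3P => [/IH1/andP[-> ->] // | /IH2/andP[-> ->] | /andP[/eqP-> /eqP->]];
  by rewrite ?mem_pend ?mem_pstart ?orbT.
Qed.

End PatternTypes.

Section Trends.
Variables (T E : eqType) (etype : E -> T) (etime : E -> rat).
Implicit Types (P : pattern T) (I s : seq E).
Local Open Scope ring_scope.

Definition junction (a b : T) : rel E :=
  fun x y => [&& etype x == a, etype y == b & etime x < etime y].

Definition trend_rel P : rel E :=
  fun x y => follows P (etype x) (etype y) && (etime x < etime y).

Definition trend_path I P s : bool :=
  all (mem I) s &&
  path_between (fun x => etype x == pstart P) (fun x => etype x == pend P) (trend_rel P) s.

Lemma trend_rel_plus P :
  trend_rel (PPlus P) =2 relU (trend_rel P) (junction (pend P) (pstart P)).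
Proof. by move=> x y; rewrite /trend_rel /junction /= andb_orl andbA. Qed.

Lemma trend_rel_seq P1 P2 : trend_rel (PSeq P1 P2) =2
  relU (trend_rel P1) (relU (trend_rel P2) (junction (pend P1) (pstart P2))).
Proof. by move=> x y; rewrite /trend_rel /junction /= !andb_orl andbA. Qed.

Lemma seg_beforeE : seg_before etime =2 seg_rel (fun x y => etime x < etime y).
Proof.
move=> [|x u] w; rewrite /seg_before //.
have -> : ohead (rev (x :: u)) = Some (last x u).
  by case/lastP: u => // u z; rewrite -rcons_cons rev_rcons last_rcons.
by case: w.
Qed.

Lemma trend_path_sorted_time I P s :
  trend_path I P s -> sorted (fun x y => etime x < etime y) s.
Proof. by case: s => // x u /andP[_ /and3P[_ _]]; apply: sub_path => a b /andP[]. Qed.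

Lemma trend_path_flatten I P ss :
  ss != [::] -> all (trend_path I P) ss -> sorted (seg_before etime) ss ->
  trend_path I (PPlus P) (flatten ss).
Proof.
move=> ss0 trends sorted_ss.
rewrite /trend_path all_flatten (eq_path_between _ _ (trend_rel_plus P)).
apply/andP; split; first by apply: sub_all trends => w /andP[].
apply: path_between_flatten => //; first by apply: sub_all trends => w /andP[].
by rewrite -(eq_sorted seg_beforeE).
Qed.

Lemma trend_path_cat I P1 P2 s1 s2 :
  trend_path I P1 s1 -> trend_path I P2 s2 ->
  sorted (fun x y => etime x < etime y) (s1 ++ s2) -> trend_path I (PSeq P1 P2) (s1 ++ s2).
Proof.
case/andP=> I1 tr1 /andP[I2 tr2] lt12.
rewrite /trend_path all_cat I1 I2 (eq_path_between _ _ (trend_rel_seq P1 P2)).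
case: s1 tr1 lt12 {I1} => // x u tr1; case: s2 tr2 {I2} => // y v tr2 lt12.
apply: path_between_cat (sub_path_between _ tr1) (sub_path_between _ tr2) _.
- exact: subrelUl.
- by move=> ? ? r; rewrite /= r orbT.
- rewrite /= /junction; case/and3P: tr1 => _ -> _; case/and3P: tr2 => -> _ _.
  by move: lt12; rewrite /= cat_path /= => /and3P[_ -> _]; rewrite !orbT.
Qed.

Lemma trend_path_plus_split I P s : trend_path I (PPlus P) s ->
  exists ss, [/\ ss != [::], s = flatten ss, all (trend_path I P) ss
                 & sorted (seg_before etime) ss].
Proof.
case/andP=> sI tr; have s0 : s != [::] by case: (s) tr.
move: tr; rewrite (eq_path_between _ _ (trend_rel_plus P)).
have junction_end_start a b : junction (pend P) (pstart P) a b ->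
    (etype a == pend P) && (etype b == pstart P).
  by case/and3P=> -> ->.
case/(path_between_split junction_end_start) => ss sE /andP[segs sorted_ss].
exists ss; split => //.
- by apply: contraNneq s0; rewrite sE => ->.
- apply/allP => w wss; rewrite /trend_path (allP segs) // andbT.
  by move: sI; rewrite sE all_flatten => /allP; apply.
- apply: sub_sorted sorted_ss => w1 w2; rewrite seg_beforeE.
  by case: w1 w2 => [|x u] [|y v] // /and3P[].
Qed.

Lemma trend_path_seq_split I P1 P2 s :
  wf_pattern (PSeq P1 P2) -> trend_path I (PSeq P1 P2) s ->
  exists s1 s2, [/\ s = s1 ++ s2, trend_path I P1 s1 & trend_path I P2 s2].
Proof.
rewrite /wf_pattern /= cat_uniq => /and3P[_ /hasPn disj _] /andP[sI].
have types_disj c : c \in ptypes P1 -> c \notin ptypes P2 by apply: contraTN => /disj.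
pose in2 v := etype v \in ptypes P2.
have r1_out a b : trend_rel P1 a b -> ~~ in2 a && ~~ in2 b.
  by case/andP=> /follows_ptypes/andP[/types_disj -> /types_disj ->].
have r2_in a b : trend_rel P2 a b -> in2 a && in2 b by case/andP=> /follows_ptypes.
have r3_cross a b : junction (pend P1) (pstart P2) a b -> ~~ in2 a && in2 b.
  by case/and3P=> /eqP ea /eqP eb _; rewrite /in2 ea eb mem_pstart types_disj ?mem_pend.
rewrite (eq_path_between _ _ (trend_rel_seq P1 P2)).
case: s sI => // x s' sI /and3P[/eqP hx /eqP hl pxs].
have [||t [y [u [s'E pt /and3P[/eqP lt /eqP hy _] pu]]]] :=
  path_crossing_split r1_out r2_in r3_cross _ _ pxs.
- by rewrite /in2 hx /= types_disj ?mem_pstart.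
- by rewrite /in2 hl /= mem_pend.
move: sI hl; rewrite s'E /= all_cat /= last_cat => /and3P[xI tI /andP[yI uI]] hl.
exists (x :: t), (y :: u); split => //.
- by rewrite /trend_path /= xI tI hx lt !eqxx.
- by rewrite /trend_path /= yI uI hy hl !eqxx.
Qed.

Lemma matches_trend_path I P s : matches etype etime I P s -> trend_path I P s.
Proof.
elim: P s => [a|P IH|P1 IH1 P2 IH2] s /=.
- by case=> e [-> eI <-]; rewrite /trend_path /= eI !eqxx.
- case=> ss [ss0 -> segs sorted_ss]; apply: trend_path_flatten => //.
  by apply/allP => w /segs/IH.
- by case=> s1 [s2 [-> /IH1 tr1 /IH2 tr2 lt12]]; apply: trend_path_cat.
Qed.

Lemma trend_path_matches I P s : wf_pattern P -> trend_path I P s -> matches etype etime I P s.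
Proof.
elim: P s => [a|P IH|P1 IH1 P2 IH2] s wf tr /=.
- case: s tr => // x [|y u] /andP[/=]; last by move=> _ /and3P[].
  by case/andP=> xI _ /andP[/eqP xa _]; exists x.
- have [ss [ss0 -> /allP trends sorted_ss]] := trend_path_plus_split tr.
  by exists ss; split => // w /trends; apply: IH.
- have [s1 [s2 [sE tr1 tr2]]] := trend_path_seq_split wf tr.
  move: wf; rewrite /wf_pattern /= cat_uniq => /and3P[wf1 _ wf2].
  exists s1, s2; split; [done | exact: IH1 | exact: IH2 |].
  exact: trend_path_sorted_time tr.
Qed.

Lemma greta_vertex_mem I P v : greta_vertex etype etime I P v -> v \in I.
Proof. by case=> s [/matches_trend_path/andP[/allP sI _] /sI]. Qed.

Lemma greta_edge_trend_rel I P x y : greta_edge etype etime I P x y -> trend_rel P x y.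
Proof.
case=> s1 [s2 /matches_trend_path/andP[_]].
case: s1 => [|z s1] /= /and3P[_ _]; first by case/andP.
by rewrite cat_path /= => /and3P[_ _ /andP[]].
Qed.

Lemma matches_greta_path I P pre x s :
  matches etype etime I P (pre ++ x :: s) -> prop_path (greta_edge etype etime I P) x s.
Proof.
elim: s pre x => //= y s IH pre x m; split; first by exists pre, s.
by apply: (IH (rcons pre x)); rewrite cat_rcons.
Qed.

End Trends.

Theorem theorem2 (T E : eqType) (etype : E -> T) (etime : E -> rat)
  (P : pattern T) (I : seq E) :
  wf_pattern P -> valid_stream etime I ->
  forall s : seq E,
    start_end_path etype etime I P s <-> matches etype etime I P s.
Proof.
move=> wf _ s; split.
- case=> x [u [-> vert edges hx hu]]; apply: trend_path_matches => //.
  apply/andP; split; first by apply/allP => v /vert/greta_vertex_mem.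
  by rewrite /= hx hu !eqxx (prop_path_sub (@greta_edge_trend_rel _ _ _ _ _ _) edges).
- move=> m; case: s m (matches_trend_path m) => // x u m /andP[_ /and3P[/eqP hx /eqP hu _]].
  exists x, u; split => //; first by move=> v vs; exists (x :: u).
  exact: (@matches_greta_path _ _ _ _ _ _ [::]).
Qed.
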